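(* Let $s\ge0$, and let $Y\in\{-1,+1\}$ and $\lambda_{C_1},\dots,\lambda_{C_s}\in\{-1,0,+1\}$ be jointly distributed random variables. Define $2\cdot3^s\times2\cdot3^s$ matrices recursively by $$A_0=\begin{bmatrix}1&1\\1&0\end{bmatrix},\quad B_0=\begin{bmatrix}0&0\\0&1\end{bmatrix},\quad D=\begin{bmatrix}1&1&1\\1&0&0\\0&1&0\end{bmatrix},\quad E=\begin{bmatrix}0&0&0\\0&0&1\\0&0&0\end{bmatrix},$$ $$A_s=D\otimes A_{s-1}+E\otimes B_{s-1},\qquad B_s=E\otimes A_{s-1}+D\otimes B_{s-1},$$ where $\otimes$ is the Kronecker product. Index vectors of length $2\cdot3^s$ by $k=t+2\sum_{i=1}^s d_i3^{i-1}$ with $t\in\{0,1\}$ and $d_i\in\{0,1,2\}$. Let $\mu_C$ be the vector whose entry $k$ is $P(Y=y,\lambda_{C_1}=b_1,\dots,\lambda_{C_s}=b_s)$ with $y=1$ if $t=0$, $y=-1$ if $t=1$, and $b_i=1,0,-1$ according as $d_i=0,1,2$. Let $r_C$ be the vector whose entry $k$ is $P\big(\prod_{z\in Z}z=1,\ z=0\ \forall z\in U\big)$, where $Z=\{Y: t=1\}\cup\{\lambda_{C_i}:d_i=1\}$ and $U=\{\lambda_{C_i}:d_i=2\}$ (an empty product equals $1$, so the entry with $Z=U=\emptyset$ equals $1$). Then $A_s\mu_C=r_C$.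
   Context: In the intended application $\lambda_{C_1},\dots,\lambda_{C_s}$ are the outputs of a clique of weak supervision sources (value $0$ meaning abstain) and $Y$ is the task they label; $\mu_C$ is the marginal distribution (label model parameter) of the clique. *)

From mathcomp Require Import all_boot all_order all_algebra.
From mathcomp Require Import mxtens.
From mathcomp Require Import reals.
Set Implicit Arguments. Unset Strict Implicit. Unset Printing Implicit Defensive.
Import GRing.Theory Num.Theory.
Local Open Scope ring_scope.

Definition mx_of_rows (R : pzRingType) n (rows : seq (seq nat)) : 'M[R]_n :=
  \matrix_(i, j) (nth 0%N (nth [::] rows i) j)%:R.

Definition A0 (R : pzRingType) : 'M[R]_2 := @mx_of_rows R 2 [:: [:: 1; 1]; [:: 1; 0]]%N.
Definition B0 (R : pzRingType) : 'M[R]_2 := @mx_of_rows R 2 [:: [:: 0; 0]; [:: 0; 1]]%N.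
Definition Dm (R : pzRingType) : 'M[R]_3 :=
  @mx_of_rows R 3 [:: [:: 1; 1; 1]; [:: 1; 0; 0]; [:: 0; 1; 0]]%N.
Definition Em (R : pzRingType) : 'M[R]_3 :=
  @mx_of_rows R 3 [:: [:: 0; 0; 0]; [:: 0; 0; 1]; [:: 0; 0; 0]]%N.

Lemma dimS s : (3 * (2 * 3 ^ s) = 2 * 3 ^ s.+1)%N.
Proof. by rewrite expnS mulnCA. Qed.

(* (A_s, B_s), both of size 2*3^s; the Kronecker product [tensmx] (A *t B)
   has entry ((i1*p+i2),(j1*q+j2)) equal to A i1 j1 * B i2 j2. *)
Fixpoint ABmx (R : pzRingType) (s : nat) : 'M[R]_(2 * 3 ^ s) * 'M[R]_(2 * 3 ^ s) :=
  match s return 'M[R]_(2 * 3 ^ s) * 'M[R]_(2 * 3 ^ s) with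
  | 0 => (A0 R, B0 R)
  | s'.+1 =>
      let: (A, B) := ABmx R s' in
      (castmx (dimS s', dimS s') (Dm R *t A + Em R *t B),
       castmx (dimS s', dimS s') (Em R *t A + Dm R *t B))
  end.

Definition Amx (R : pzRingType) s := (ABmx R s).1.
Definition Bmx (R : pzRingType) s := (ABmx R s).2.

(* Digits of an index k = t + 2 * sum_{i=1}^s d_i 3^(i-1);
   the 0-based index i : 'I_s stands for the paper's i+1. *)
Definition tdig (k : nat) : nat := (k %% 2)%N.
Definition ddig (k : nat) (i : nat) : nat := ((k %/ (2 * 3 ^ i)) %% 3)%N.

Definition yval (t : nat) : int := if t == 0%N then 1 else -1.
Definition bval (d : nat) : int := if d == 0%N then 1 else if d == 1%N then 0 else -1.

Definition prob (R : realType) (Omega : finType) (w : Omega -> R)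
  (E : pred Omega) : R := \sum_(om | E om) w om.

Definition is_prob (R : realType) (Omega : finType) (w : Omega -> R) : Prop :=
  (forall om, 0 <= w om) /\ \sum_om w om = 1.

Definition muC (R : realType) (Omega : finType) (w : Omega -> R) (s : nat)
  (Y : Omega -> int) (lam : 'I_s -> Omega -> int) : 'cV[R]_(2 * 3 ^ s) :=
  \col_k prob w (fun om => (Y om == yval (tdig k)) &&
                   [forall i : 'I_s, lam i om == bval (ddig k i)]).

Definition rC (R : realType) (Omega : finType) (w : Omega -> R) (s : nat)
  (Y : Omega -> int) (lam : 'I_s -> Omega -> int) : 'cV[R]_(2 * 3 ^ s) :=
  \col_k prob w (fun om =>
     ((if tdig k == 1%N then Y om else 1) *
        \prod_(i : 'I_s | ddig k i == 1%N) lam i om == 1)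
     && [forall i : 'I_s, (ddig k i == 2%N) ==> (lam i om == 0)]).

From mathcomp Require Import all_boot all_order all_algebra.
From mathcomp Require Import mxtens reals zify.
Import GRing.Theory Num.Theory.
Set Implicit Arguments. Unset Strict Implicit. Unset Printing Implicit Defensive.
Local Open Scope ring_scope.

(* Both sides are linear in the distribution, so it suffices to take a point
   mass at one outcome (y, b).  Then mu_C is the unit vector at the unique
   index j whose digits encode (y, b), and A_s mu_C is column j of A_s.  By
   induction along the Kronecker recursion, entry (k, j) of A_s (resp. B_s) is
   1 exactly when, at the outcome coded by j, the variables of U(k) vanish and
   the product of those of Z(k) is 1 (resp. -1); this is entry k of r_C. *)

Section MixedRadix.

Variable s : nat.

Lemma tdig_mulD q r : tdig (q * (2 * 3 ^ s) + r) = tdig r.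
Proof. by rewrite /tdig mulnCA mulnC modnMDl. Qed.

Lemma ddig_mulD q r i : (i < s)%N -> ddig (q * (2 * 3 ^ s) + r) i = ddig r i.
Proof.
move=> lt_is; rewrite /ddig.
have -> : (q * (2 * 3 ^ s) = q * 3 ^ (s - i.+1) * 3 * (2 * 3 ^ i))%N.
  by rewrite -[in LHS](subnK lt_is) expnD expnS; lia.
by rewrite divnMDl ?muln_gt0 ?expn_gt0 // modnMDl.
Qed.

Lemma ddig_mulD_top q r : (q < 3)%N -> (r < 2 * 3 ^ s)%N ->
  ddig (q * (2 * 3 ^ s) + r) s = q.
Proof.
move=> lt_q3 lt_r; rewrite /ddig divnMDl ?muln_gt0 ?expn_gt0 //.
by rewrite divn_small // addn0 modn_small.
Qed.

Lemma edivn_dimS k : (k < 2 * 3 ^ s.+1)%N ->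
  [/\ (k %/ (2 * 3 ^ s) < 3)%N, (k %% (2 * 3 ^ s) < 2 * 3 ^ s)%N
    & k = (k %/ (2 * 3 ^ s) * (2 * 3 ^ s) + k %% (2 * 3 ^ s))%N].
Proof.
have m_gt0 : (0 < 2 * 3 ^ s)%N by rewrite muln_gt0 expn_gt0.
by move=> lt_k; rewrite ltn_divLR // ltn_pmod // -divn_eq dimS.
Qed.

End MixedRadix.

Lemma tdig_lt2 k : (tdig k < 2)%N. Proof. exact: ltn_pmod. Qed.

Lemma ddig_lt3 k i : (ddig k i < 3)%N. Proof. exact: ltn_pmod. Qed.

Lemma eq_of_digits s (j1 j2 : nat) : (j1 < 2 * 3 ^ s)%N -> (j2 < 2 * 3 ^ s)%N ->
  tdig j1 = tdig j2 -> (forall i, (i < s)%N -> ddig j1 i = ddig j2 i) -> j1 = j2.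
Proof.
elim: s j1 j2 => [|s IH] j1 j2 lt_j1 lt_j2 eq_t eq_d.
  by move: eq_t; rewrite /tdig !modn_small.
case/edivn_dimS: lt_j1 => lt_q1 lt_r1 E1.
case/edivn_dimS: lt_j2 => lt_q2 lt_r2 E2.
rewrite E1 E2 in eq_t eq_d *; congr (_ * _ + _)%N.
  by have := eq_d s (ltnSn s); rewrite !ddig_mulD_top.
apply: IH => //; first by rewrite !tdig_mulD in eq_t.
by move=> i lt_is; have := eq_d i (ltnW lt_is); rewrite !ddig_mulD.
Qed.

Definition digits s (j : 'I_(2 * 3 ^ s)) : 'I_2 * {ffun 'I_s -> 'I_3} :=
  (Ordinal (tdig_lt2 j), [ffun i : 'I_s => Ordinal (ddig_lt3 j i)]).

Lemma digits_inj s : injective (@digits s).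
Proof.
rewrite /digits => j1 j2 -[eq_t /ffunP eq_d].
apply/val_inj/(eq_of_digits (ltn_ord j1) (ltn_ord j2) eq_t).
by move=> i lt_is; have := congr1 val (eq_d (Ordinal lt_is)); rewrite !ffunE.
Qed.

Lemma digits_onto s t (d : 'I_s -> nat) : (t < 2)%N -> (forall i, d i < 3)%N ->
  exists j : 'I_(2 * 3 ^ s), tdig j = t /\ forall i : 'I_s, ddig j i = d i.
Proof.
move=> lt_t lt_d.
have card_digits : (#|{: 'I_2 * {ffun 'I_s -> 'I_3}}| <= #|'I_(2 * 3 ^ s)|)%N.
  by rewrite card_prod card_ffun !card_ord.
have /codomP[j /pair_equal_spec[/(congr1 val) t_j /ffunP d_j]] :=
  inj_card_onto (@digits_inj s) card_digits
    (Ordinal lt_t, [ffun i => Ordinal (lt_d i)]).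
by exists j; split=> // i; have := congr1 val (d_j i); rewrite !ffunE.
Qed.

Lemma yval_inj : {in [pred t | t < 2]%N &, injective yval}.
Proof. by move=> [|[|t1]] [|[|t2]]. Qed.

Lemma bval_inj : {in [pred d | d < 3]%N &, injective bval}.
Proof. by move=> [|[|[|d1]]] [|[|[|d2]]]. Qed.

Lemma bval_eq0 d : (bval d == 0) = (d == 1%N).
Proof. by case: d => [|[|]]. Qed.

Lemma index_of_values s (y : int) (b : 'I_s -> int) :
  y = 1 \/ y = -1 -> (forall i, b i = 1 \/ b i = 0 \/ b i = -1) ->
  exists j0 : 'I_(2 * 3 ^ s), forall j : 'I_(2 * 3 ^ s),
    (y == yval (tdig j)) && [forall i, b i == bval (ddig j i)] = (j == j0).
Proof.
move=> y_pm1 b_3.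
pose d i := if b i == 1 then 0%N else if b i == 0 then 1%N else 2%N.
have lt_d i : (d i < 3)%N by rewrite /d; case: ifP => //; case: ifP.
have lt_t : ((if y == 1 then 0 else 1) < 2)%N by case: ifP.
have [j0 [t_j0 d_j0]] := digits_onto lt_t lt_d.
have y_j0 : yval (tdig j0) = y by rewrite t_j0; case: y_pm1 => ->.
have b_j0 (i : 'I_s) : bval (ddig j0 i) = b i.
  by rewrite d_j0 /d; case: (b_3 i) => [->|[->|->]].
exists j0 => j; apply/idP/eqP => [/andP[/eqP y_j /forallP b_j] | -> {j}].
  apply: val_inj; apply: (eq_of_digits (ltn_ord j) (ltn_ord j0)).
    by apply: yval_inj; rewrite ?inE ?tdig_lt2 // y_j0.
  move=> i lt_is; apply: bval_inj; rewrite ?inE ?ddig_lt3 //.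
  by have /eqP <- := b_j (Ordinal lt_is); rewrite -(b_j0 (Ordinal lt_is)).
by rewrite y_j0 eqxx; apply/forallP => i; rewrite b_j0.
Qed.

(* At the outcome coded by the index [j], [zprod s k j] is the product of the
   variables in Z and [uzero s k j] says that all variables in U vanish, where
   Z and U are read off the digits of [k]. *)
Definition zprod s (k j : nat) : int :=
  (if tdig k == 1%N then yval (tdig j) else 1) *
  \prod_(i < s | ddig k i == 1%N) bval (ddig j i).

Definition uzero s (k j : nat) : bool :=
  [forall i : 'I_s, (ddig k i == 2%N) ==> (ddig j i == 1%N)].

Lemma forall_ord_recr n (P : pred nat) :
  [forall i : 'I_n.+1, P i] = [forall i : 'I_n, P i] && P n.
Proof.
have big_forall m : [forall i : 'I_m, P i] = \big[andb/true]_(i < m) P i.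
  by rewrite big_andE.
by rewrite !big_forall big_ord_recr.
Qed.

Section HeadDigit.

Variables (s k j : nat).
Hypotheses (lt_k : (k < 2 * 3 ^ s.+1)%N) (lt_j : (j < 2 * 3 ^ s.+1)%N).
Let m := (2 * 3 ^ s)%N.

Lemma zprodS : zprod s.+1 k j =
  zprod s (k %% m) (j %% m) * (if k %/ m == 1 then bval (j %/ m) else 1)%N.
Proof.
case/edivn_dimS: lt_k => lt_qk lt_rk Ek; case/edivn_dimS: lt_j => lt_qj lt_rj Ej.
rewrite {1}Ek {1}Ej /zprod big_mkcond big_ord_recr /= -big_mkcond mulrA.
rewrite !tdig_mulD !ddig_mulD_top //; congr (_ * _ * _).
by apply: eq_big => i; rewrite !ddig_mulD.
Qed.

Lemma uzeroS : uzero s.+1 k j =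
  uzero s (k %% m) (j %% m) && ((k %/ m == 2) ==> (j %/ m == 1))%N.
Proof.
case/edivn_dimS: lt_k => lt_qk lt_rk Ek; case/edivn_dimS: lt_j => lt_qj lt_rj Ej.
rewrite {1}Ek {1}Ej /uzero.
rewrite (forall_ord_recr _ (fun i => (ddig _ i == 2) ==> (ddig _ i == 1)))%N.
rewrite !ddig_mulD_top //.
by congr (_ && _); apply: eq_forallb => i; rewrite !ddig_mulD.
Qed.

End HeadDigit.

Lemma ABmxS (R : pzRingType) s :
  Amx R s.+1 = castmx (dimS s, dimS s) (Dm R *t Amx R s + Em R *t Bmx R s) /\
  Bmx R s.+1 = castmx (dimS s, dimS s) (Em R *t Amx R s + Dm R *t Bmx R s).
Proof. by rewrite /Amx /Bmx /=; case: (ABmx R s). Qed.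

Lemma ABmxE (R : pzRingType) s (k j : 'I_(2 * 3 ^ s)) :
  Amx R s k j = ((zprod s k j == 1) && uzero s k j)%:R /\
  Bmx R s k j = ((zprod s k j == -1) && uzero s k j)%:R.
Proof.
elim: s k j => [|s IH] k j.
  have -> : uzero 0 k j by apply/forallP => -[].
  rewrite /Amx /Bmx /= /A0 /B0 /mx_of_rows !mxE /zprod big_ord0 mulr1.
  by case: k j => [[|[|k]] lt_k] // [[|[|j]] lt_j].
have [-> ->] := ABmxS R s; have lt_k := ltn_ord k; have lt_j := ltn_ord j.
rewrite !castmxE !mxE /= zprodS // uzeroS //.
rewrite !(proj1 (IH _ _)) !(proj2 (IH _ _)) /=.
case/edivn_dimS: lt_k => + _ _; case/edivn_dimS: lt_j => + _ _.
move: (zprod s _ _) (uzero s _ _) (k %/ _)%N (j %/ _)%N => z u q q'.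
(* For head digits q of k and q' of j, Dm q q' = 1 when the new variable keeps
   the sign of the product and Em q q' = 1 when it flips it (q = 1, q' = 2). *)
by case: q q' => [|[|[|q]]] [|[|[|q']]] // _ _ /=; case: u;
  rewrite ?mul1r ?mul0r ?add0r ?addr0 ?mulr1 ?mulr0 ?mulrN1 ?eqr_oppLR
          ?andbT ?andbF.
Qed.

Lemma col_prob_sum (R : realType) (Omega : finType) (w : Omega -> R) n
    (E : 'I_n -> pred Omega) :
  \col_k prob w (E k) = \sum_om w om *: \col_k (E k om)%:R.
Proof.
apply/matrixP => k c; rewrite !mxE summxE /prob big_mkcond.
by apply: eq_bigr => om _; rewrite !mxE mulr_natr mulrb.
Qed.

Lemma Amx_mul_point (R : pzRingType) s (y : int) (b : 'I_s -> int) :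
  y = 1 \/ y = -1 -> (forall i, b i = 1 \/ b i = 0 \/ b i = -1) ->
  Amx R s *m \col_j ((y == yval (tdig j))
                      && [forall i : 'I_s, b i == bval (ddig j i)])%:R =
  \col_k (((if tdig k == 1%N then y else 1)
             * \prod_(i : 'I_s | ddig k i == 1%N) b i == 1)
          && [forall i : 'I_s, (ddig k i == 2%N) ==> (b i == 0)])%:R.
Proof.
move=> y_pm1 b_3; have [j0 point_j0] := index_of_values y_pm1 b_3.
have /andP[/eqP y_j0 /forallP b_j0] : (y == yval (tdig j0)) &&
    [forall i, b i == bval (ddig j0 i)] by rewrite point_j0.
apply/matrixP => k c; rewrite !mxE (bigD1 j0) //= big1 => [|j /negbTE j_j0];
  last by rewrite !mxE point_j0 j_j0 mulr0.
rewrite !mxE point_j0 eqxx mulr1 addr0 (ABmxE R k j0).1 /zprod /uzero -y_j0.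
rewrite (eq_bigr _ (fun i _ => esym (eqP (b_j0 i)))); congr ((_ && _)%:R).
by apply: eq_forallb => i; rewrite (eqP (b_j0 i)) bval_eq0.
Qed.

Theorem lemma2 (R : realType) (Omega : finType) (w : Omega -> R) (s : nat)
  (Y : Omega -> int) (lam : 'I_s -> Omega -> int) :
  is_prob w ->
  (forall om, Y om = 1 \/ Y om = -1) ->
  (forall i om, lam i om = 1 \/ lam i om = 0 \/ lam i om = -1) ->
  Amx R s *m muC w Y lam = rC w Y lam.
Proof.
move=> _ Y_pm1 lam_3; rewrite /muC /rC !col_prob_sum mulmx_sumr.
apply: eq_bigr => om _; rewrite -scalemxAr; congr (_ *: _).
exact: Amx_mul_point.
Qed.
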